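(* Let $H_0$ be a Hermitian operator on a finite-dimensional Hilbert space with ground-space projection $P_0$, $Q_0=I-P_0$, ground energy $E_0$, $G=Q_0(E_0I-H_0)^{-1}Q_0$, and $V$ Hermitian. Then $V_{\mathrm{od}}\in\Gamma^\star(1)$, $S_n\in\Gamma^\star(n)$ for every $n\in\mathbb{N}$, and $\hat S^k(V_{\mathrm{od}})_m\in\Gamma(m+1)$ for all $k,m$.
   Context: $\Gamma(n)$ is the linear span of operators $Z_0VZ_1V\cdots Z_{n-1}VZ_n$ ($n$ factors of $V$) with each $Z_j\in\{P_0,Q_0\}\cup\{G^m:m\in\mathbb{N}\}$; $\Gamma^\star(n)\subseteq\Gamma(n)$ is the span of such products that additionally satisfy $Z_0Z_n=Z_nZ_0=0$. Set $V_{\mathrm d}=P_0VP_0+Q_0VQ_0$, $V_{\mathrm{od}}=P_0VQ_0+Q_0VP_0$, $\mathcal{L}(X)=P_0XG-GXP_0$, $\mathrm{ad}_S(X)=[S,X]$, $a_m=2^m\beta_m/m!$ with $\beta_m$ the Bernoulli numbers. Define $S_1=\mathcal{L}(V_{\mathrm{od}})$, $S_2=-\mathcal{L}(\mathrm{ad}_{V_{\mathrm d}}(S_1))$, and for $n\ge3$, $S_n=-\mathcal{L}(\mathrm{ad}_{V_{\mathrm d}}(S_{n-1}))+\sum_{j\ge1}a_{2j}\mathcal{L}(\hat S^{2j}(V_{\mathrm{od}})_{n-1})$, where $\hat S^k(V_{\mathrm{od}})_m=\sum_{n_1,\dots,n_k\ge1,\ \sum_r n_r=m}\mathrm{ad}_{S_{n_1}}\cdots\mathrm{ad}_{S_{n_k}}(V_{\mathrm{od}})$.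 *)

From HB Require Import structures.
From mathcomp Require Import all_boot all_order all_algebra.
Set Implicit Arguments. Unset Strict Implicit. Unset Printing Implicit Defensive.
Import Order.TTheory GRing.Theory Num.Theory.
Local Open Scope ring_scope.

(* Bernoulli numbers (convention beta_1 = -1/2; only even indices are used):
   beta_0 = 1, beta_m = -1/(m+1) * sum_{k<m} C(m+1,k) beta_k. *)
Fixpoint bernoulli_seq (m : nat) : seq rat :=
  match m with
  | 0 => [:: 1]
  | m'.+1 =>
      let s := bernoulli_seq m' in
      rcons s (- (m'.+2%:R)^-1 *
                 \sum_(k < m'.+1) ('C(m'.+2, k))%:R * nth 0 s k)
  end.
Definition bernoulli (m : nat) : rat := nth 0 (bernoulli_seq m) m.

Definition a_coef (m : nat) : rat := 2%:R ^+ m * bernoulli m / (m`!)%:R.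

Section Ops.
Variables (C : numClosedFieldType) (N : nat).
Local Notation M := 'M[C]_N.

Definition adjmx (A : M) : M := (map_mx Num.conj A)^T.
Definition herm_mx (A : M) : Prop := adjmx A = A.

Definition ground_energy (H0 : M) (E0 : C) : Prop :=
  eigenvalue H0 E0 /\ forall a, eigenvalue H0 a -> E0 <= a.

(* P0 is the (orthogonal) projection onto the ground space
   ker (H0 - E0) (row-vector convention of mxalgebra). *)
Definition ground_projection (H0 : M) (E0 : C) (P0 : M) : Prop :=
  [/\ adjmx P0 = P0, P0 *m P0 = P0 & (P0 == eigenspace H0 E0)%MS].

(* G = Q0 (E0 I - H0)^{-1} Q0, the inverse of E0 - H0 restricted to the range
   of Q0 = 1 - P0 (extended by 0 on the ground space).  Since E0 - H0 vanishes on
   the ground space and is invertible on its complement, E0 - H0 + P0 is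
   invertible and its inverse agrees with (E0 - H0)^{-1} on ran Q0. *)
Definition reduced_resolvent (H0 : M) (E0 : C) (P0 : M) : M :=
  (1%:M - P0) *m invmx (E0%:M - H0 + P0) *m (1%:M - P0).

Variables (P0 G V : M).
Definition Q0 : M := 1%:M - P0.

Inductive Zlab := ZP | ZQ | ZG of nat (* ZG k stands for G^(k+1) *).
Definition Zval (z : Zlab) : M :=
  match z with ZP => P0 | ZQ => Q0 | ZG k => G ^+ k.+1 end.

(* Z_0 V Z_1 V ... V Z_n for the word [:: Z_0; ...; Z_n] *)
Fixpoint Zprod_from (A : M) (w : seq Zlab) : M :=
  match w with
  | [::] => A
  | z :: w' => Zprod_from (A *m V *m Zval z) w'
  end.
Definition Zprod (w : seq Zlab) : M :=
  match w with [::] => 1%:M | z :: w' => Zprod_from (Zval z) w' end.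

Definition first_Z (w : seq Zlab) : M := Zval (head ZP w).
Definition last_Z (w : seq Zlab) : M := Zval (last ZP w).

(* Gamma(n): linear span of the products with n factors of V *)
Definition Gamma (n : nat) (X : M) : Prop :=
  exists (ws : seq (seq Zlab)) (cs : seq C),
    all (fun w => size w == n.+1) ws /\
    X = \sum_(i < size ws) cs`_i *: Zprod (nth [::] ws i).

Definition Gamma_star (n : nat) (X : M) : Prop :=
  exists (ws : seq (seq Zlab)) (cs : seq C),
    all (fun w => size w == n.+1) ws /\
    (forall i : 'I_(size ws), let w := nth [::] ws i in
       first_Z w *m last_Z w = 0 /\ last_Z w *m first_Z w = 0) /\
    X = \sum_(i < size ws) cs`_i *: Zprod (nth [::] ws i).

Definition Vd : M := P0 *m V *m P0 + Q0 *m V *m Q0.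
Definition Vod : M := P0 *m V *m Q0 + Q0 *m V *m P0.
Definition Lop (X : M) : M := P0 *m X *m G - G *m X *m P0.
Definition ad (S X : M) : M := S *m X - X *m S.

(* hat S^k (Vod)_m, given the family S_1, S_2, ... as a function S:
   sum over n_1,...,n_k >= 1 with n_1+...+n_k = m of
   ad_{S_{n_1}} ... ad_{S_{n_k}} (Vod).  (k = 0: Vod if m = 0, else 0.) *)
Fixpoint Shat_with (S : nat -> M) (k m : nat) : M :=
  match k with
  | 0 => if m == 0%N then Vod else 0
  | k'.+1 => \sum_(1 <= n1 < m.+1) ad (S n1) (Shat_with S k' (m - n1))
  end.

(* Given s = [:: S_1; ...; S_n'], compute S_{n'+1}.  The sum over j >= 1 is
   truncated at j <= n', which is exact since hat S^{2j}(Vod)_{n'} = 0 when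
   2j > n' (empty set of compositions). *)
Definition Snext (s : seq M) (n' : nat) : M :=
  let S := fun i => nth 0 s i.-1 in
  match n' with
  | 0 => Lop Vod
  | 1 => - Lop (ad Vd (S 1%N))
  | _ => - Lop (ad Vd (S n')) +
         \sum_(1 <= j < n'.+1) ratr (a_coef (2 * j)) *: Lop (Shat_with S (2 * j) n')
  end.

Fixpoint Sseq (n : nat) : seq M :=
  match n with
  | 0 => [::]
  | n'.+1 => let s := Sseq n' in rcons s (Snext s n')
  end.

(* S_n for n >= 1 *)
Definition Sgen (n : nat) : M := nth 0 (Sseq n) n.-1.
Definition Shat (k m : nat) : M := Shat_with Sgen k m.

End Ops.

From HB Require Import structures.
From mathcomp Require Import all_boot all_order all_algebra.
From mathcomp Require Import zify.
Set Implicit Arguments. Unset Strict Implicit. Unset Printing Implicit Defensive.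
Import Order.TTheory GRing.Theory Num.Theory.
Local Open Scope ring_scope.

(* Only P0^2 = P0 and P0 G = G P0 = 0 matter.  Under these relations the
   labels {P0, Q0, G^m} are closed under multiplication up to 0, so the product
   of two words in the Z_j and V is again such a word (or 0).  Hence spans of
   words with a prescribed number of V's multiply by adding these numbers, and
   L maps such a span into the span of words whose end factors are P0 and G^m
   (in some order), i.e. into the starred span; the recursion for S_n therefore
   stays inside these spans. *)

Lemma idem_mul_subr (R : pzRingType) (N : nat) (P : 'M[R]_N) :
  P *m P = P -> P *m (1%:M - P) = 0.
Proof. by move=> P_idem; rewrite mulmxBr mulmx1 P_idem subrr. Qed.

Lemma idem_mul_subl (R : pzRingType) (N : nat) (P : 'M[R]_N) :
  P *m P = P -> (1%:M - P) *m P = 0.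
Proof. by move=> P_idem; rewrite mulmxBl mul1mx P_idem subrr. Qed.

Section WordAlgebra.
Variables (C : numClosedFieldType) (N : nat) (P0 G V : 'M[C]_N).
Hypothesis P0_idem : P0 *m P0 = P0.
Hypothesis P0_G : P0 *m G = 0.
Hypothesis G_P0 : G *m P0 = 0.

Local Notation M := 'M[C]_N.
Local Arguments Zprod : simpl never.
Local Notation Zval := (Zval P0 G).
Local Notation Zprod := (Zprod P0 G V).
Local Notation Q0 := (Q0 P0).

Lemma P0_Q0 : P0 *m Q0 = 0.
Proof. exact: idem_mul_subr. Qed.

Lemma Q0_P0 : Q0 *m P0 = 0.
Proof. exact: idem_mul_subl. Qed.

Lemma Q0_idem : Q0 *m Q0 = Q0.
Proof. by rewrite {1}/Q0 mulmxBl mul1mx P0_Q0 subr0. Qed.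

Lemma Q0_G : Q0 *m G = G.
Proof. by rewrite /Q0 mulmxBl mul1mx P0_G subr0. Qed.

Lemma G_Q0 : G *m Q0 = G.
Proof. by rewrite /Q0 mulmxBr mulmx1 G_P0 subr0. Qed.

(* [None] stands for the product 0. *)
Definition label_mul (a b : Zlab) : option Zlab :=
  match a, b with
  | ZP, ZP => Some ZP
  | ZQ, ZQ => Some ZQ
  | ZQ, ZG k | ZG k, ZQ => Some (ZG k)
  | ZG j, ZG k => Some (ZG (j + k).+1)
  | _, _ => None
  end.

Definition label_val (o : option Zlab) : M := if o is Some b then Zval b else 0.

Lemma Zval_mul a b : Zval a *m Zval b = label_val (label_mul a b).
Proof.
have GSl k : G ^+ k.+1 = G *m G ^+ k by rewrite exprS mulmxE.
have GSr k : G ^+ k.+1 = G ^+ k *m G by rewrite exprSr mulmxE.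
case: a => [||j]; case: b => [||k] /=;
  rewrite ?P0_idem ?P0_Q0 ?Q0_P0 ?Q0_idem //.
- by rewrite GSl mulmxA P0_G mul0mx.
- by rewrite GSl mulmxA Q0_G.
- by rewrite GSr -mulmxA G_P0 mulmx0.
- by rewrite GSr -mulmxA G_Q0.
- by rewrite mulmxE -exprD addSn addnS.
Qed.

Fixpoint suffix_prod (w : seq Zlab) : M :=
  if w is z :: w' then V *m Zval z *m suffix_prod w' else 1%:M.

Definition prefix_prod (u : seq Zlab) : M :=
  if u is [::] then 1%:M else Zprod u *m V.

Lemma Zprod_fromE A w : Zprod_from P0 G V A w = A *m suffix_prod w.
Proof.
elim: w A => [|z w IH] A /=; first by rewrite mulmx1.
by rewrite IH !mulmxA.
Qed.

Lemma suffix_prod_cat u w : suffix_prod (u ++ w) = suffix_prod u *m suffix_prod w.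
Proof.
elim: u => [|z u IH] /=; first by rewrite mul1mx.
by rewrite IH !mulmxA.
Qed.

Lemma Zprod_cons z w : Zprod (z :: w) = Zval z *m suffix_prod w.
Proof. exact: Zprod_fromE. Qed.

Lemma Zprod_cat_cons u z w :
  Zprod (u ++ z :: w) = prefix_prod u *m Zval z *m suffix_prod w.
Proof.
case: u => [|z0 u] /=; first by rewrite Zprod_cons mul1mx.
by rewrite !Zprod_cons suffix_prod_cat /= !mulmxA.
Qed.

Lemma Zprod_rcons u z : Zprod (rcons u z) = prefix_prod u *m Zval z.
Proof. by rewrite -cats1 Zprod_cat_cons mulmx1. Qed.

Lemma mul_Zval_Zprod a z w : Zval a *m Zprod (z :: w) =
  if label_mul a z is Some b then Zprod (b :: w) else 0.
Proof.
rewrite !Zprod_cons mulmxA Zval_mul.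
by case: (label_mul a z) => [b|] /=; rewrite ?Zprod_cons ?mul0mx.
Qed.

Lemma mul_Zprod_Zval u z a : Zprod (rcons u z) *m Zval a =
  if label_mul z a is Some b then Zprod (rcons u b) else 0.
Proof.
rewrite Zprod_rcons -mulmxA Zval_mul.
by case: (label_mul z a) => [b|] /=; rewrite ?Zprod_rcons ?mulmx0.
Qed.

Lemma mul_Zprod u z z' w : Zprod (rcons u z) *m Zprod (z' :: w) =
  if label_mul z z' is Some b then Zprod (u ++ b :: w) else 0.
Proof.
rewrite Zprod_rcons Zprod_cons !mulmxA -(mulmxA (prefix_prod u)) Zval_mul.
by case: (label_mul z z') => [b|] /=; rewrite ?Zprod_cat_cons ?mulmx0 ?mul0mx.
Qed.

Inductive word_span (P : seq Zlab -> Prop) : M -> Prop :=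
  | word_span0 : word_span P 0
  | word_span_cons c w X : P w -> word_span P X -> word_span P (c *: Zprod w + X).
Arguments word_span0 {P}.
Arguments word_span_cons {P} c {w X}.

Lemma word_span_word (P : seq Zlab -> Prop) w : P w -> word_span P (Zprod w).
Proof.
by move=> Pw; have := word_span_cons 1 Pw word_span0; rewrite scale1r addr0.
Qed.

Lemma word_spanD P X Y : word_span P X -> word_span P Y -> word_span P (X + Y).
Proof.
elim=> [|c w X' Pw _ IH] spanY; first by rewrite add0r.
by rewrite -addrA; apply: word_span_cons => //; apply: IH.
Qed.

Lemma word_spanZ P c X : word_span P X -> word_span P (c *: X).
Proof.
elim=> [|c' w X' Pw _ IH]; first by rewrite scaler0; apply: word_span0.
by rewrite scalerDr scalerA; apply: word_span_cons.
Qed.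

Lemma word_spanN P X : word_span P X -> word_span P (- X).
Proof. by rewrite -scaleN1r; apply: word_spanZ. Qed.

Lemma word_spanB P X Y : word_span P X -> word_span P Y -> word_span P (X - Y).
Proof. by move=> spanX spanY; apply: word_spanD => //; apply: word_spanN. Qed.

Lemma word_span_sum P m n (F : nat -> M) :
  (forall i, (m <= i < n)%N -> word_span P (F i)) ->
  word_span P (\sum_(m <= i < n) F i).
Proof.
move=> spanF; rewrite big_nat_cond; apply: big_ind => //.
- exact: word_span0.
- exact: word_spanD.
- by move=> i /andP[? _]; apply: spanF.
Qed.

Lemma word_span_sub (P Q : seq Zlab -> Prop) X :
  (forall w, P w -> Q w) -> word_span P X -> word_span Q X.
Proof.
move=> PQ; elim=> [|c w X' Pw _ IH]; first exact: word_span0.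
by apply: word_span_cons => //; apply: PQ.
Qed.

Lemma word_span_linear P Q (f : {linear M -> M}) X :
  (forall w, P w -> word_span Q (f (Zprod w))) ->
  word_span P X -> word_span Q (f X).
Proof.
move=> spanfw; elim=> [|c w X' Pw _ IH]; first by rewrite linear0; apply: word_span0.
by rewrite linearD linearZ; apply: word_spanD => //; apply/word_spanZ/spanfw.
Qed.

Lemma word_span_nth P X : word_span P X ->
  exists (ws : seq (seq Zlab)) (cs : seq C),
    (forall i : 'I_(size ws), P (nth [::] ws i)) /\
    X = \sum_(i < size ws) cs`_i *: Zprod (nth [::] ws i).
Proof.
elim=> [|c w X' Pw _ [ws [cs [Pws ->]]]].
  by exists [::], [::]; split=> [[]|]; rewrite ?big_ord0.
exists (w :: ws), (c :: cs); split; last by rewrite big_ord_recl.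
by case=> [[|i]] //= lti; apply: (Pws (Ordinal (lti : (i < size ws)%N))).
Qed.

Definition sized_word (n : nat) (w : seq Zlab) : Prop := size w = n.+1.

Definition orth_labels (a b : Zlab) : Prop :=
  Zval a *m Zval b = 0 /\ Zval b *m Zval a = 0.

Definition star_word (n : nat) (w : seq Zlab) : Prop :=
  size w = n.+1 /\ orth_labels (head ZP w) (last ZP w).

Lemma word_span_star_sized n X :
  word_span (star_word n) X -> word_span (sized_word n) X.
Proof. by apply: word_span_sub => w []. Qed.

Lemma orth_labels_sym a b : orth_labels a b -> orth_labels b a.
Proof. by case. Qed.

Lemma orth_labels_P0_G k : orth_labels ZP (ZG k).
Proof. by split; rewrite Zval_mul. Qed.

Lemma word_span_mulmx a b Y X :
  word_span (sized_word a) Y -> word_span (sized_word b) X ->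
  word_span (sized_word (a + b)) (Y *m X).
Proof.
move=> spanY spanX.
apply: (@word_span_linear _ _ (mulmxr X)) spanY => u.
case/lastP: u => [//|u z] size_uz /=.
apply: (@word_span_linear _ _ (mulmx (Zprod (rcons u z)))) spanX => -[//|z' w] size_w /=.
rewrite mul_Zprod; case: label_mul => [c|]; last exact: word_span0.
apply: word_span_word; move: size_uz size_w.
by rewrite /sized_word size_cat size_rcons /=; lia.
Qed.

Lemma word_span_ad a b X Y :
  word_span (sized_word a) X -> word_span (sized_word b) Y ->
  word_span (sized_word (a + b)) (ad X Y).
Proof.
move=> spanX spanY; apply: word_spanB; first exact: word_span_mulmx.
by rewrite addnC; apply: word_span_mulmx.
Qed.

(* The first hypothesis handles one-letter words, whose two end factors coincide. *)
Lemma Zval_Zprod_Zval_star a b n w :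
  (forall z c, label_mul a z = Some c -> label_mul c b = None) ->
  (forall z z' c c', label_mul a z = Some c -> label_mul z' b = Some c' ->
     orth_labels c c') ->
  sized_word n w -> word_span (star_word n) (Zval a *m Zprod w *m Zval b).
Proof.
move=> single_zero ends_orth; case: w => [//|z w] size_w.
rewrite mul_Zval_Zprod; case az: label_mul => [c|]; last first.
  by rewrite mul0mx; apply: word_span0.
case/lastP: w size_w => [|u z'] size_w.
  rewrite -[[:: c]]/(rcons [::] c) mul_Zprod_Zval (single_zero z c az).
  exact: word_span0.
rewrite -rcons_cons mul_Zprod_Zval; case z'b: label_mul => [c'|]; last exact: word_span0.
apply: word_span_word; split; first by rewrite -size_w /= !size_rcons.
by rewrite /= last_rcons; apply: (ends_orth z z').
Qed.

Lemma Zval_G : Zval (ZG 0) = G.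
Proof. exact: expr1. Qed.

Lemma P0_Zprod_G_star n w :
  sized_word n w -> word_span (star_word n) (P0 *m Zprod w *m G).
Proof.
rewrite -Zval_G -[P0]/(Zval ZP); apply: Zval_Zprod_Zval_star.
  by case=> // c [<-].
by case=> // z' c c' [<-]; case: z' => // [|k] [<-]; apply: orth_labels_P0_G.
Qed.

Lemma G_Zprod_P0_star n w :
  sized_word n w -> word_span (star_word n) (G *m Zprod w *m P0).
Proof.
rewrite -Zval_G -[P0]/(Zval ZP); apply: Zval_Zprod_Zval_star.
  by case=> [||j] // c [<-].
move=> z z' c c'; case: z => [||j] // [<-];
  by case: z' => // -[<-]; apply/orth_labels_sym/orth_labels_P0_G.
Qed.

Lemma word_span_Lop n X :
  word_span (sized_word n) X -> word_span (star_word n) (Lop P0 G X).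
Proof.
move=> spanX; apply: word_spanB.
- apply: (@word_span_linear _ _ (mulmxr G \o mulmx P0)) spanX => w /=.
  exact: P0_Zprod_G_star.
- apply: (@word_span_linear _ _ (mulmxr P0 \o mulmx G)) spanX => w /=.
  exact: G_Zprod_P0_star.
Qed.

Lemma Vod_star : word_span (star_word 1) (Vod P0 V).
Proof.
have -> : Vod P0 V = Zprod [:: ZP; ZQ] + Zprod [:: ZQ; ZP] by [].
by apply: word_spanD; apply: word_span_word; split; rewrite //=; split; rewrite Zval_mul.
Qed.

Lemma Vd_sized : word_span (sized_word 1) (Vd P0 V).
Proof.
have -> : Vd P0 V = Zprod [:: ZP; ZP] + Zprod [:: ZQ; ZQ] by [].
by apply: word_spanD; apply: word_span_word.
Qed.

Lemma Shat_with_sized S k m :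
  (forall i, (1 <= i <= m)%N -> word_span (sized_word i) (S i)) ->
  word_span (sized_word m.+1) (Shat_with P0 V S k m).
Proof.
elim: k m => [|k IH] m spanS /=.
  case: eqP => [->|_]; last exact: word_span0.
  exact: word_span_star_sized Vod_star.
apply: word_span_sum => n1 /andP[n1_gt0 n1_le].
have -> : m.+1 = (n1 + (m - n1).+1)%N by lia.
apply: word_span_ad; first by apply: spanS; lia.
by apply: IH => i i_le; apply: spanS; lia.
Qed.

Lemma Snext_star s n :
  (forall j, (1 <= j <= n)%N -> word_span (star_word j) (nth 0 s j.-1)) ->
  word_span (star_word n.+1) (Snext P0 G V s n).
Proof.
move=> spanS.
have sizedS j : (1 <= j <= n)%N -> word_span (sized_word j) (nth 0 s j.-1).
  by move=> j_range; apply/word_span_star_sized/spanS.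
have spanVd_S j : (1 <= j <= n)%N ->
    word_span (star_word j.+1) (- Lop P0 G (ad (Vd P0 V) (nth 0 s j.-1))).
  move=> j_range; apply/word_spanN/word_span_Lop; rewrite -add1n.
  exact: word_span_ad Vd_sized (sizedS j j_range).
case: n spanS sizedS spanVd_S => [|[|n]] spanS sizedS spanVd_S /=.
- exact/word_span_Lop/word_span_star_sized/Vod_star.
- exact: spanVd_S.
apply: word_spanD; first by apply: spanVd_S; rewrite leqnn.
apply: word_span_sum => j _; apply/word_spanZ/word_span_Lop/Shat_with_sized.
by move=> i i_range; apply: sizedS.
Qed.

Lemma size_Sseq n : size (Sseq P0 G V n) = n.
Proof. by elim: n => //= n IH; rewrite size_rcons IH. Qed.

Lemma Sgen_S n : Sgen P0 G V n.+1 = Snext P0 G V (Sseq P0 G V n) n.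
Proof. by rewrite /Sgen /= nth_rcons size_Sseq ltnn eqxx. Qed.

Lemma nth_Sseq n i : (i < n)%N -> nth 0 (Sseq P0 G V n) i = Sgen P0 G V i.+1.
Proof.
elim: n => // n IH lt_i_Sn /=; rewrite nth_rcons size_Sseq.
case: (ltnP i n) => [lt_i_n|le_n_i]; first exact: IH.
have -> : i = n by lia.
by rewrite eqxx Sgen_S.
Qed.

Lemma Sgen_star n : (1 <= n)%N -> word_span (star_word n) (Sgen P0 G V n).
Proof.
elim/ltn_ind: n => -[//|n] IH _; rewrite Sgen_S; apply: Snext_star.
case=> [//|j] /andP[_ lt_j_n] /=; rewrite nth_Sseq //.
by apply: IH; rewrite ?ltnS.
Qed.

Lemma word_span_Gamma n X : word_span (sized_word n) X -> Gamma P0 G V n X.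
Proof.
case/word_span_nth=> ws [cs [size_ws ->]]; exists ws, cs; split => //.
by apply/(all_nthP [::]) => i lt_i; apply/eqP/(size_ws (Ordinal lt_i)).
Qed.

Lemma word_span_Gamma_star n X :
  word_span (star_word n) X -> Gamma_star P0 G V n X.
Proof.
case/word_span_nth=> ws [cs [star_ws ->]]; exists ws, cs; split.
  by apply/(all_nthP [::]) => i lt_i; apply/eqP; case: (star_ws (Ordinal lt_i)).
by split=> // i; case: (star_ws i).
Qed.

End WordAlgebra.

Theorem lemma3 (C : numClosedFieldType) (N : nat) (H0 V P0 : 'M[C]_N) (E0 : C) :
  herm_mx H0 -> herm_mx V ->
  ground_energy H0 E0 -> ground_projection H0 E0 P0 ->
  let G := reduced_resolvent H0 E0 P0 in
  [/\ Gamma_star P0 G V 1 (Vod P0 V),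
      forall n : nat, (1 <= n)%N -> Gamma_star P0 G V n (Sgen P0 G V n)
    & forall k m : nat, Gamma P0 G V m.+1 (Shat P0 G V k m)].
Proof.
move=> _ _ _ [_ P0_idem _] G.
have P0_G : P0 *m G = 0 by rewrite /G /reduced_resolvent !mulmxA idem_mul_subr ?mul0mx.
have G_P0 : G *m P0 = 0 by rewrite /G /reduced_resolvent -mulmxA idem_mul_subl ?mulmx0.
have Sgen_span := Sgen_star V P0_idem P0_G G_P0.
split.
- exact/word_span_Gamma_star/(Vod_star V P0_idem P0_G G_P0).
- by move=> n n_gt0; apply/word_span_Gamma_star/Sgen_span.
- move=> k m; apply/word_span_Gamma/(Shat_with_sized P0_idem P0_G G_P0).
  by move=> i /andP[i_gt0 _]; apply/word_span_star_sized/Sgen_span.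
Qed.
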